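(* If Weighted Majority Rule 5 selects $P$ over $Q$, then $SC(P)\le SC(Q)+(1+\sqrt2)\,SC(Z)$ for every point $Z$ of the metric space.
   Context: Voters $N$ and candidates $P,Q$ are points of an arbitrary metric space $(X,d)$; $SC(Y)=\sum_{i\in N}d(i,Y)$ for $Y\in X$. $A$ is the set of voters preferring $P$ ($d(i,P)\le d(i,Q)$) with strengths $\alpha_i=d(i,Q)/d(i,P)$; $B$ the set preferring $Q$ with strengths $\beta_j=d(j,P)/d(j,Q)$. Let $w(x)=\frac{\sqrt2x-1}{x+1}$ for $x>\sqrt2$ and $w(x)=x-1$ for $1\le x\le\sqrt2$. Weighted Majority Rule 5 selects $P$ over $Q$ iff $\sum_{i\in A}w(\alpha_i)\ge\sum_{j\in B}w(\beta_j)$. *)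

From Stdlib Require Import Reals Lra List.
Open Scope R_scope.

Definition is_metric {X : Type} (d : X -> X -> R) : Prop :=
  (forall x y, 0 <= d x y) /\
  (forall x y, d x y = 0 <-> x = y) /\
  (forall x y, d x y = d y x) /\
  (forall x y z, d x z <= d x y + d y z).

Definition SC {X : Type} (d : X -> X -> R) (voters : list X) (Y : X) : R :=
  fold_right (fun i acc => d i Y + acc) 0 voters.

Definition w (x : R) : R :=
  if Rle_dec x (sqrt 2) then x - 1 else (sqrt 2 * x - 1) / (x + 1).

(* Degenerate cases: near = 0 < far means strength = +infinity, weight
   lim_{x->oo} w x = sqrt 2; near = far = 0 is a tie (strength 1), weight w 1 = 0. *)
Definition voter_weight (near far : R) : R :=
  if Req_EM_T near 0 then (if Req_EM_T far 0 then 0 else sqrt 2)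
  else w (far / near).

Definition weight_A {X : Type} (d : X -> X -> R) (voters : list X) (P Q : X) : R :=
  fold_right (fun i acc =>
    (if Rle_dec (d i P) (d i Q) then voter_weight (d i P) (d i Q) else 0) + acc)
    0 voters.

Definition weight_B {X : Type} (d : X -> X -> R) (voters : list X) (P Q : X) : R :=
  fold_right (fun j acc =>
    (if Rle_dec (d j P) (d j Q) then 0 else voter_weight (d j Q) (d j P)) + acc)
    0 voters.

Definition WMR5_selects_P {X : Type} (d : X -> X -> R) (voters : list X) (P Q : X) : Prop :=
  weight_B d voters P Q <= weight_A d voters P Q.

From Stdlib Require Import Reals List Lra Psatz.
Open Scope R_scope.

(* Fix Z and put a = d(P,Z).  For every voter i we bound its
   contribution d(i,P) - d(i,Q) - (1+√2) d(i,Z) to SC(P) - SC(Q) - (1+√2) SC(Z):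
   - if i prefers P (strength α = d(i,Q)/d(i,P)) it is at most  -a·w(α);
   - if i prefers Q (strength β = d(i,P)/d(i,Q)) it is at most   a·w(β).
   Both follow from the triangle inequality and four properties of the weight
   of a voter with distances near <= far:  0 <= v <= √2,  near·v <= far - near
   and  far - near <= far·v  (these encode w(x) <= x - 1 and w(x) >= 1 - 1/x,
   which is exactly where the choice of w and the constant 1+√2 matter).
   Summing over the voters gives
     SC(P) - SC(Q) - (1+√2) SC(Z) <= a · (Σ_B w(β_j) - Σ_A w(α_i)),
   and the right-hand side is <= 0 when Rule 5 selects P. *)

Lemma sqrt2_sq : sqrt 2 * sqrt 2 = 2.
Proof. apply sqrt_sqrt; lra. Qed.

Lemma sqrt2_gt_5_4 : 5 / 4 < sqrt 2.
Proof. pose proof sqrt2_sq; pose proof (sqrt_pos 2); nra. Qed.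

(* Properties of w on [1, +oo): w is a weight in [0, √2] squeezed between
   1 - 1/t and t - 1.  The lower bound needs (√2-1)t² - t + 1 >= 0, i.e. √2 > 5/4. *)
Lemma w_bounds (t : R) : 1 <= t ->
  0 <= w t /\ w t <= sqrt 2 /\ w t <= t - 1 /\ t - 1 <= t * w t.
Proof.
  intro Ht. pose proof sqrt2_sq. pose proof sqrt2_gt_5_4.
  unfold w; destruct (Rle_dec t (sqrt 2)) as [Hle | Hgt].
  - repeat split; nra.
  - set (W := (sqrt 2 * t - 1) / (t + 1)).
    assert (HW : W * (t + 1) = sqrt 2 * t - 1) by (unfold W; field; lra).
    (* (√2-1)t² - t + 1 >= t²/4 - t + 1 = (t/2 - 1)² >= 0 *)
    assert (Hquad : 0 <= (sqrt 2 - 1) * (t * t) - t + 1) by nra.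
    repeat split; nra.
Qed.

Lemma voter_weight_bounds (near far : R) : 0 <= near <= far ->
  let v := voter_weight near far in
  0 <= v /\ v <= sqrt 2 /\ near * v <= far - near /\ far - near <= far * v.
Proof.
  intros [Hnear Hfar] v. pose proof sqrt2_gt_5_4. unfold v, voter_weight.
  destruct (Req_EM_T near 0) as [E | E].
  - subst near. destruct (Req_EM_T far 0); repeat split; nra.
  - assert (Hfar_eq : far = far / near * near) by (field; lra).
    assert (Ht : 1 <= far / near).
    { apply (Rmult_le_reg_r near); [lra |]. lra. }
    destruct (w_bounds (far / near) Ht) as (H0 & Hs & Hup & Hlow).
    repeat split; nra.
Qed.

Lemma voter_prefers_P (x y z a : R) :
  0 <= x <= y -> 0 <= z -> 0 <= a <= x + z ->
  x - y - (1 + sqrt 2) * z <= - (a * voter_weight x y).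
Proof.
  intros Hxy Hz Ha.
  destruct (voter_weight_bounds x y Hxy) as (H0 & Hs & Hup & _).
  nra.
Qed.

Lemma voter_prefers_Q (x y z a : R) :
  0 <= y < x -> 0 <= z -> 0 <= a -> x <= a + z ->
  x - y - (1 + sqrt 2) * z <= a * voter_weight y x.
Proof.
  intros Hxy Hz Ha Hx.
  destruct (voter_weight_bounds y x ltac:(lra)) as (H0 & Hs & _ & Hlow).
  nra.
Qed.

Lemma social_cost_excess (X : Type) (d : X -> X -> R) (hd : is_metric d)
  (voters : list X) (P Q Z : X) :
  SC d voters P - SC d voters Q - (1 + sqrt 2) * SC d voters Z <=
  d P Z * (weight_B d voters P Q - weight_A d voters P Q).
Proof.
  destruct hd as (Hpos & _ & Hsym & Htri).
  induction voters as [| i vs IH]; simpl; [lra |].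
  assert (HPZ : d P Z <= d i P + d i Z).
  { rewrite (Hsym i P). apply Htri. }
  assert (HiP : d i P <= d P Z + d i Z).
  { rewrite <- (Hsym Z P), (Rplus_comm (d Z P)). apply Htri. }
  pose proof (Hpos i P); pose proof (Hpos i Q); pose proof (Hpos i Z);
  pose proof (Hpos P Z).
  destruct (Rle_dec (d i P) (d i Q)) as [HA | HB].
  - pose proof (voter_prefers_P (d i P) (d i Q) (d i Z) (d P Z)
                  ltac:(lra) ltac:(lra) ltac:(lra)).
    lra.
  - pose proof (voter_prefers_Q (d i P) (d i Q) (d i Z) (d P Z)
                  ltac:(lra) ltac:(lra) ltac:(lra) ltac:(lra)).
    lra.
Qed.

Theorem mainTheorem15 (X : Type) (d : X -> X -> R) (hd : is_metric d)
  (voters : list X) (P Q : X) :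
  WMR5_selects_P d voters P Q ->
  forall Z : X, SC d voters P <= SC d voters Q + (1 + sqrt 2) * SC d voters Z.
Proof.
  intros Hselect Z. unfold WMR5_selects_P in Hselect.
  pose proof (social_cost_excess X d hd voters P Q Z) as Hexcess.
  assert (HPZ : 0 <= d P Z) by (destruct hd; auto).
  assert (Hmargin :
    d P Z * (weight_B d voters P Q - weight_A d voters P Q) <= 0).
  { nra. }
  lra.
Qed.
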